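(* Let $r=r(n)\ge3$ and $m=m(n)$ be integers with $r=o(n^{1/2})$ and $1\le m=O(\log(r^{-2}n))$. Let $\mathcal{H}^+_r(n,m)$ be the set of $H\in\mathcal{H}_r(n,m)$ such that: (a) any two edges share at most two vertices; (b) every cluster consists of exactly two edges; (c) any two distinct clusters are vertex-disjoint; (d) there are at most two clusters. Then, as $n\to\infty$, \[ \frac{|\mathcal{H}^+_r(n,m)|}{|\mathcal{H}_r(n,m)|}=1-O\Bigl(\frac{r^6m^2}{n^3}\Bigr). \]
   Context: $\mathcal{H}_r(n,m)$ is the set of $r$-uniform hypergraphs on $[n]$ with exactly $m$ edges. Two edges are linked if they share exactly two vertices; with $G_H$ the graph on the edges of $H$ whose adjacency is linkedness, a cluster of $H$ is the sub-hypergraph formed by the edges of a connected component of $G_H$ with at least two vertices. $\log$ is natural. *)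

From mathcomp Require Import all_boot.
Set Implicit Arguments. Unset Strict Implicit. Unset Printing Implicit Defensive.

Definition hgraph (n : nat) := {set {set 'I_n}}.

Definition Hrnm (n r m : nat) : {set hgraph n} :=
  [set H : hgraph n | [forall e in H, #|e| == r] && (#|H| == m)].

(* Two edges of H are linked if they share exactly two vertices;
   this is the adjacency relation of the graph G_H on the edges of H. *)
Definition linkedH n (H : hgraph n) : rel {set 'I_n} :=
  fun e f => [&& e \in H, f \in H & #|e :&: f| == 2].

Definition compH n (H : hgraph n) (e : {set 'I_n}) : hgraph n :=
  [set f | connect (linkedH H) e f].

Definition clusters n (H : hgraph n) : {set hgraph n} :=
  [set compH H e | e in H & 2 <= #|compH H e|].

Definition vtx n (C : hgraph n) : {set 'I_n} := \bigcup_(e in C) e.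

Definition Hplus (n r m : nat) : {set hgraph n} :=
  [set H in Hrnm n r m |
    [&& [forall e in H, forall f in H, (e != f) ==> (#|e :&: f| <= 2)],
        [forall C in clusters H, #|C| == 2],
        [forall C1 in clusters H, forall C2 in clusters H,
                     (C1 != C2) ==> [disjoint vtx C1 & vtx C2]]
      & #|clusters H| <= 2]].

(* The proof is a first-moment argument.
   - Structure: if r > 2 and H has no list of distinct edges forming one of
     four small configurations (a "thick pair" sharing >= 3 vertices, a
     linked path e-f-g, two linked pairs the second touching the first, three
     linked pairs), then every cluster is a single linked pair and H satisfies
     (a)-(d), i.e. H is in H^+ ([copies_outside_plus]).
   - Probability: H is a uniform m-subset of the N = C(n,r) r-sets, so a fixed
     list of k distinct r-sets lies in H for a fraction at most (m/N)^k of all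
     H ([bin_ratio], [first_moment]).
   - Counting: the copies of each configuration among all r-sets are bounded by
     counting the r-sets meeting a given set in t vertices ([sum_meeting]).
   Together these give, over nat, |H_r \ H^+| n^6 <= |H_r| (m^2 r^6 n^3
   + m^3 r^8 n^2 + 2 m^4 r^10 n + m^6 r^12) ([card_outside_plus]).
   Finally the hypotheses yield 2 K r <= sqrt n and m r <= 2 K sqrt n for large
   n ([log_budget]), which make the last three terms O(m^2 r^6 n^3)
   ([error_terms], [plus_defect_bound]). *)

From mathcomp Require Import all_boot zify.
Set Implicit Arguments. Unset Strict Implicit. Unset Printing Implicit Defensive.

Lemma bin_ratio k m N : k <= m -> m <= N ->
  'C(N - k, m - k) * N ^ k <= 'C(N, m) * m ^ k.
Proof.
elim: k => [|k IH] km mN; first by rewrite !subn0 !expn0 !muln1.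
have {}IH := IH (ltnW km) mN.
have Nk_gt0 : 0 < N - k by rewrite subn_gt0 (leq_trans km).
have pascal : (N - k) * 'C(N - k.+1, m - k.+1) = (m - k) * 'C(N - k, m - k).
  by rewrite !subnS mul_bin_diag prednK // subn_gt0.
have shrink : (m - k) * N <= m * (N - k).
  by rewrite mulnBl mulnBr leq_sub2l // mulnC leq_mul2l mN orbT.
rewrite -(leq_pmul2l Nk_gt0) !expnS mulnA pascal mulnACA.
rewrite ['C(N, m) * _]mulnCA [X in _ <= X]mulnA [(N - k) * m]mulnC.
exact: leq_mul shrink IH.
Qed.

Lemma bin_le_exp a t : 'C(a, t) <= a ^ t.
Proof.
apply: (@leq_trans (a ^_ t)); first by rewrite -bin_ffact leq_pmulr ?fact_gt0.
by elim: t => [|t IH] //; rewrite ffactnSr expnS mulnC leq_mul ?leq_subr.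
Qed.

Lemma bin_ge_n n r : 0 < r -> r < n -> n <= 'C(n, r).
Proof.
move=> r_gt0 rn; rewrite -(subnKC rn).
elim: (n - r.+1) => [|d IH]; first by rewrite addn0 binSn.
case: r r_gt0 {rn} IH => [|r] // _ IH.
rewrite addnS binS -add1n [_ + 'C(_, _)]addnC leq_add // bin_gt0.
by lia.
Qed.

Lemma sum_indicator (U : finType) (X : {set U}) (p : pred U) :
  \sum_(x in X) p x = #|[set x in X | p x]|.
Proof.
rewrite -sum1_card big_mkcond [in RHS]big_mkcond; apply: eq_bigr => x _.
by rewrite inE; case: (x \in X); case: (p x).
Qed.

Section Subsets.
Variable T : finType.
Implicit Types A B S : {set T}.

Lemma card_bigcup_le (I : finType) (P : pred I) (F : I -> {set T}) :
  #|\bigcup_(i | P i) F i| <= \sum_(i | P i) #|F i|.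
Proof.
elim/big_rec2: _ => [|i n U _ leUn]; first by rewrite cards0.
by rewrite (leq_trans (leq_card_setU _ U).1) ?leq_add2l.
Qed.

Definition ksubsets (A : {set T}) k : {set {set T}} :=
  [set B : {set T} | B \subset A & #|B| == k].

Lemma card_ksubsets A k : #|ksubsets A k| = 'C(#|A|, k).
Proof. exact: cards_draws. Qed.

(* k-subsets containing S correspond to (k-|S|)-subsets of A \ S. *)
Lemma card_ksubsets_sup A S k : S \subset A ->
  #|[set B in ksubsets A k | S \subset B]| <= 'C(#|A| - #|S|, k - #|S|).
Proof.
move=> SA; rewrite -(cardsDS SA) -card_ksubsets.
set X := [set B in _ | _].
have inj : {in X &, injective (fun B => B :\: S)}.
  move=> B1 B2; rewrite !inE => /andP[_ SB1] /andP[_ SB2] /setP eqD.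
  apply/setP => x; have := eqD x; rewrite !inE.
  by case: (boolP (x \in S)) => [xS _|//]; rewrite (subsetP SB1) ?(subsetP SB2).
rewrite -(card_in_imset inj); apply/subset_leq_card/subsetP => D /imsetP[B].
rewrite !inE => /andP[/andP[BA /eqP Bk] SB] ->.
by rewrite setSD //= cardsDS // Bk.
Qed.

Lemma ksubsets_sup_ratio A S k : S \subset A ->
  #|[set B in ksubsets A k | S \subset B]| * #|A| ^ #|S| <= 'C(#|A|, k) * k ^ #|S|.
Proof.
move=> SA; have [/andP[Sk kA]|] := boolP ((#|S| <= k) && (k <= #|A|)).
  apply: leq_trans (bin_ratio Sk kA).
  by rewrite leq_mul2r card_ksubsets_sup ?orbT.
move=> small; rewrite (_ : #|_| = 0) //; apply: eq_card0 => B; rewrite !inE.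
apply: contraNF small => /andP[/andP[BA /eqP <-] SB].
by rewrite !subset_leq_card.
Qed.

(* [tuple_sum R k F] sums [F s] over all lists [s] of length [k] with entries
   in [R]; its unfolding is literally a [k]-fold nested sum. *)
Fixpoint tuple_sum (R : {set T}) (k : nat) (F : seq T -> nat) : nat :=
  if k is k'.+1 then \sum_(e in R) tuple_sum R k' (fun s => F (e :: s)) else F [::].

Section TupleSum.
Variable R : {set T}.

Lemma tuple_sum_le k (F G : seq T -> nat) :
  (forall s, size s = k -> all (mem R) s -> F s <= G s) ->
  tuple_sum R k F <= tuple_sum R k G.
Proof.
elim: k F G => [|k IH] F G FG /=; first exact: FG.
apply: leq_sum => e eR; apply: IH => s sz Rs.
by apply: FG; rewrite /= ?sz ?eR.
Qed.

Lemma tuple_sum_ge k (F : seq T -> nat) s :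
  size s = k -> all (mem R) s -> F s <= tuple_sum R k F.
Proof.
elim: k F s => [|k IH] F [|e s] //= [sz] /andP[eR Rs].
apply: leq_trans (IH (fun t => F (e :: t)) s sz Rs) _.
by rewrite (bigD1 e) //= leq_addr.
Qed.

Lemma exchange_tuple_sum (U : finType) (X : {set U}) k (F : U -> seq T -> nat) :
  \sum_(H in X) tuple_sum R k (F H) = tuple_sum R k (fun s => \sum_(H in X) F H s).
Proof.
elim: k F => [|k IH] F //=.
by rewrite exchange_big; apply: eq_bigr => e _; apply: (IH (fun H s => F H (e :: s))).
Qed.

Lemma tuple_sum_mulr k (F : seq T -> nat) c :
  tuple_sum R k F * c = tuple_sum R k (fun s => F s * c).
Proof.
elim: k F => [|k IH] F //=.
by rewrite big_distrl; apply: eq_bigr => e _; apply: IH.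
Qed.

Lemma first_moment k (P : pred (seq T)) m : (forall s, P s -> uniq s) ->
  (\sum_(H in ksubsets R m) tuple_sum R k (fun s => P s && ([set x in s] \subset H)))
    * #|R| ^ k <= tuple_sum R k P * ('C(#|R|, m) * m ^ k).
Proof.
move=> P_uniq; rewrite exchange_tuple_sum !tuple_sum_mulr.
apply: tuple_sum_le => s sz Rs; have [Ps|] := boolP (P s); last first.
  by move/negbTE=> nPs; rewrite big1 // => H _; rewrite nPs.
have card_s : #|[set x in s]| = k by rewrite cardsE -sz; apply/card_uniqP/P_uniq.
have sR : [set x in s] \subset R by apply/subsetP => x; rewrite inE; apply: (allP Rs).
rewrite mul1n -card_s; apply: leq_trans (ksubsets_sup_ratio m sR).
by rewrite leq_mul2r sum_indicator; apply/orP; right; apply: eq_leq; apply: eq_card.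
Qed.

End TupleSum.
End Subsets.

Lemma sum_mul_le (U : finType) (X : {set U}) (F : U -> nat) c B :
  (forall x, x \in X -> F x * c <= B) -> (\sum_(x in X) F x) * c <= #|X| * B.
Proof.
move=> FB; rewrite big_distrl -sum1_card big_distrl /=.
by apply: leq_sum => x xX; rewrite mul1n FB.
Qed.

Lemma sum_weighted_le (U : finType) (X : {set U}) (a : pred U) (G : U -> nat) c d M D :
  (forall x, x \in X -> a x -> G x * c <= M) -> (\sum_(x in X) a x) * d <= D ->
  (\sum_(x in X) a x * G x) * (c * d) <= M * D.
Proof.
move=> GM aD; rewrite mulnA.
apply: (@leq_trans ((\sum_(x in X) a x * M) * d)).
  rewrite leq_mul2r big_distrl; apply/orP; right; apply: leq_sum => x xX.
  by case: (boolP (a x)) => ax; rewrite ?mul0n // !mul1n GM.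
by rewrite -big_distrl /= mulnAC mulnC leq_mul2l aD orbT.
Qed.

Section SmallConfigurations.
Variable T : finType.
Implicit Types s : seq {set T}.

Definition thick_pair s : bool :=
  if s is [:: e; f] then uniq s && (3 <= #|e :&: f|) else false.

Definition linked_path s : bool :=
  if s is [:: e; f; g] then [&& uniq s, #|e :&: f| == 2 & #|f :&: g| == 2] else false.

Definition touching_pairs s : bool :=
  if s is [:: e1; e2; e3; e4] then
    [&& uniq s, #|e1 :&: e2| == 2, #|e3 :&: e4| == 2 & 0 < #|(e1 :|: e2) :&: e3|]
  else false.

Definition three_pairs s : bool :=
  if s is [:: e1; e2; e3; e4; e5; e6] then
    [&& uniq s, #|e1 :&: e2| == 2, #|e3 :&: e4| == 2 & #|e5 :&: e6| == 2]
  else false.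

Lemma thick_pair_uniq s : thick_pair s -> uniq s.
Proof. by case: s => [|? [|? []]] // /andP[]. Qed.

Lemma linked_path_uniq s : linked_path s -> uniq s.
Proof. by case: s => [|? [|? [|? []]]] // /and3P[]. Qed.

Lemma touching_pairs_uniq s : touching_pairs s -> uniq s.
Proof. by case: s => [|? [|? [|? [|? []]]]] // /and4P[]. Qed.

Lemma three_pairs_uniq s : three_pairs s -> uniq s.
Proof. by case: s => [|? [|? [|? [|? [|? [|? []]]]]]] // /and4P[]. Qed.

End SmallConfigurations.

Definition rsets (n r : nat) : {set {set 'I_n}} := [set e : {set 'I_n} | #|e| == r].

Section CountingInKnr.
Variables n r : nat.
Local Notation N := 'C(n, r).
Local Notation Rs := (rsets n r).

Lemma card_rsets : #|Rs| = N.
Proof. by rewrite card_draws card_ord. Qed.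

Lemma card_rsets_sup (S : {set 'I_n}) :
  #|[set f in Rs | S \subset f]| * n ^ #|S| <= N * r ^ #|S|.
Proof.
have := ksubsets_sup_ratio r (subsetT S); rewrite cardsT card_ord.
by apply: leq_trans; apply: eq_leq; congr (_ * _); apply: eq_card => f; rewrite !inE subsetT.
Qed.

(* The r-sets meeting a fixed set A in at least t vertices: union bound over
   the t-subsets of A. *)
Lemma sum_meeting (A : {set 'I_n}) t :
  (\sum_(f in Rs) (t <= #|A :&: f|)) * n ^ t <= 'C(#|A|, t) * (N * r ^ t).
Proof.
rewrite sum_indicator -card_ksubsets.
have cover : [set f in Rs | t <= #|A :&: f|] \subset
             \bigcup_(S in ksubsets A t) [set f in Rs | S \subset f].
  apply/subsetP => f; rewrite inE => /andP[fR tAf].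
  have : 0 < #|ksubsets (A :&: f) t| by rewrite card_ksubsets bin_gt0.
  rewrite card_gt0 => /set0Pn[S]; rewrite inE => /andP[SAf St].
  apply/bigcupP; exists S; first by rewrite inE St (subset_trans SAf) ?subsetIl.
  by rewrite inE fR (subset_trans SAf) ?subsetIr.
apply: leq_trans (leq_mul (subset_leq_card cover) (leqnn _)) _.
apply: leq_trans (leq_mul (card_bigcup_le _ _) (leqnn _)) _.
apply: sum_mul_le => S; rewrite inE => /andP[_ /eqP <-].
exact: card_rsets_sup.
Qed.

Lemma sum_linked (e : {set 'I_n}) : e \in Rs ->
  (\sum_(f in Rs) (2 <= #|e :&: f|)) * n ^ 2 <= r ^ 2 * (N * r ^ 2).
Proof.
rewrite inE => /eqP er; apply: leq_trans (sum_meeting e 2) _.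
by rewrite er leq_mul2r bin_le_exp orbT.
Qed.

Lemma sum_linked_pairs :
  (\sum_(e in Rs) \sum_(f in Rs) (2 <= #|e :&: f|)) * n ^ 2 <= N * (r ^ 2 * (N * r ^ 2)).
Proof. by rewrite -{1}card_rsets; apply: sum_mul_le => e; apply: sum_linked. Qed.

(* The number of copies of each configuration among lists of r-sets: every
   linked pair costs a factor r^4 / n^2 and a touching a factor 2 r^2 / n
   relative to N^k. *)
Lemma count_thick_pair : tuple_sum Rs 2 (@thick_pair _) * n ^ 3 <= N ^ 2 * r ^ 6.
Proof.
apply: (@leq_trans ((\sum_(e in Rs) \sum_(f in Rs) (3 <= #|e :&: f|)) * n ^ 3)).
  rewrite leq_mul2r; apply/orP; right; apply: leq_sum => e _; apply: leq_sum => f _.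
  by rewrite /=; case: (3 <= _); rewrite ?andbT ?andbF // leq_b1.
apply: leq_trans (@sum_mul_le _ _ _ _ (r ^ 3 * (N * r ^ 3)) _) _.
  move=> e; rewrite inE => /eqP er; apply: leq_trans (sum_meeting e 3) _.
  by rewrite er leq_mul2r bin_le_exp orbT.
by rewrite card_rsets; apply: eq_leq; nia.
Qed.

Lemma count_linked_path : tuple_sum Rs 3 (@linked_path _) * n ^ 4 <= N ^ 3 * r ^ 8.
Proof.
apply: (@leq_trans ((\sum_(e in Rs) \sum_(f in Rs) (2 <= #|e :&: f|) *
   \sum_(g in Rs) (2 <= #|f :&: g|)) * (n ^ 2 * n ^ 2))).
  rewrite -expnD leq_mul2r; apply/orP; right; apply: leq_sum => e _; apply: leq_sum => f _.
  rewrite big_distrr; apply: leq_sum => g _ /=.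
  by case: (boolP [&& _, _ & _]) => // /and3P[_ /eqP -> /eqP ->].
apply: leq_trans (@sum_mul_le _ _ _ _ ((r ^ 2 * (N * r ^ 2)) * (r ^ 2 * (N * r ^ 2))) _) _.
  by move=> e eR; apply: sum_weighted_le => [f fR _|]; apply: sum_linked.
by rewrite card_rsets; apply: eq_leq; nia.
Qed.

Lemma count_touching_pairs :
  tuple_sum Rs 4 (@touching_pairs _) * n ^ 5 <= N ^ 4 * (2 * r ^ 10).
Proof.
apply: (@leq_trans ((\sum_(e1 in Rs) \sum_(e2 in Rs) (2 <= #|e1 :&: e2|) *
   (\sum_(e3 in Rs) (1 <= #|(e1 :|: e2) :&: e3|) *
    \sum_(e4 in Rs) (2 <= #|e3 :&: e4|))) * ((n ^ 2 * n ^ 1) * n ^ 2))).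
  rewrite -!expnD leq_mul2r; apply/orP; right.
  apply: leq_sum => e1 _; apply: leq_sum => e2 _; rewrite big_distrr /=.
  apply: leq_sum => e3 _; rewrite mulnA big_distrr; apply: leq_sum => e4 _ /=.
  by case: (boolP [&& _, _, _ & _]) => // /and4P[_ /eqP -> /eqP -> ->].
apply: leq_trans (@sum_mul_le _ _ _ _
  ((r ^ 2 * (N * r ^ 2) * (2 * r * (N * r ^ 1))) * (r ^ 2 * (N * r ^ 2))) _) _.
  move=> e1 e1R; apply: sum_weighted_le => [e2 e2R _|]; last exact: sum_linked.
  apply: sum_weighted_le => [e3 e3R _|]; first exact: sum_linked.
  apply: leq_trans (sum_meeting _ 1) _; rewrite bin1 leq_mul2r; apply/orP; right.
  apply: leq_trans (leq_card_setU _ _).1 _.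
  by move: e1R e2R; rewrite !inE => /eqP -> /eqP ->; rewrite addnn -mul2n.
by rewrite card_rsets; apply: eq_leq; nia.
Qed.

Lemma count_three_pairs : tuple_sum Rs 6 (@three_pairs _) * n ^ 6 <= N ^ 6 * r ^ 12.
Proof.
set W := \sum_(e in Rs) \sum_(f in Rs) (2 <= #|e :&: f|).
have pull Y : \sum_(e in Rs) \sum_(f in Rs) (2 <= #|e :&: f|) * Y = W * Y.
  by rewrite /W big_distrl; apply: eq_bigr => e _; rewrite big_distrl.
apply: (@leq_trans (W * (W * W) * (n ^ 2 * (n ^ 2 * n ^ 2)))).
  rewrite -!expnD leq_mul2r -pull -pull; apply/orP; right.
  apply: leq_sum => e1 _; apply: leq_sum => e2 _; rewrite big_distrr /=.
  apply: leq_sum => e3 _; rewrite big_distrr /=; apply: leq_sum => e4 _.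
  rewrite mulnA /W big_distrr /=; apply: leq_sum => e5 _.
  rewrite big_distrr /=; apply: leq_sum => e6 _ /=.
  by case: (boolP [&& _, _, _ & _]) => // /and4P[_ /eqP -> /eqP -> /eqP ->].
rewrite mulnACA; apply: leq_trans (leq_mul sum_linked_pairs _) _.
  by rewrite mulnACA; apply: leq_mul; apply: sum_linked_pairs.
by apply: eq_leq; nia.
Qed.

End CountingInKnr.

Definition avoids n (H : hgraph n) k (P : pred (seq {set 'I_n})) :=
  forall s, size s = k -> all (mem H) s -> ~~ P s.

Section Structure.
Variables n r m : nat.
Hypothesis r_gt2 : 2 < r.
Variable H : hgraph n.
Hypothesis H_in : H \in Hrnm n r m.

Lemma edge_card e : e \in H -> #|e| = r.
Proof. by move: H_in; rewrite inE => /andP[/forall_inP Hr _] /Hr /eqP. Qed.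

(* Since r > 2, an edge is never linked to itself. *)
Lemma linked_neq e f : linkedH H e f -> e != f.
Proof.
case/and3P => eH _; apply: contraTneq => <-.
by rewrite setIid edge_card // neq_ltn r_gt2 orbT.
Qed.

Lemma connect_linked_sym : connect_sym (linkedH H).
Proof. by apply: sym_connect_sym => e f; rewrite /linkedH setIC andbCA. Qed.

Lemma compH_eq e f : f \in compH H e -> compH H f = compH H e.
Proof.
rewrite inE => ef; apply/setP => g; rewrite !inE.
by apply/idP/idP => [/(connect_trans ef)//|]; apply: connect_trans; rewrite connect_linked_sym.
Qed.

Lemma clusters_meet C1 C2 e : C1 \in clusters H -> C2 \in clusters H ->
  e \in C1 -> e \in C2 -> C1 = C2.
Proof.
by move=> /imsetP[e1 _ ->] /imsetP[e2 _ ->] /compH_eq <- /compH_eq <-.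
Qed.

Lemma clusters_edge_neq C1 C2 e f : C1 \in clusters H -> C2 \in clusters H ->
  C1 != C2 -> e \in C1 -> f \in C2 -> e != f.
Proof.
move=> C1c C2c C12 eC1 fC2; apply: contraNneq C12 => ef.
by rewrite (clusters_meet C1c C2c eC1) // ef.
Qed.

Section NoLinkedPath.
Hypothesis no_path : avoids H 3 (@linked_path _).

Lemma compH_linked e f : linkedH H e f -> compH H e = [set e; f].
Proof.
move=> lef; have /and3P[eH fH ef2] := lef.
have closed_ef : closed (linkedH H) (mem [set e; f]).
  apply: (intro_closed connect_linked_sym) => x y lxy.
  have /and3P[_ yH xy2] := lxy; have xy := linked_neq lxy.
  have ef := linked_neq lef.
  rewrite !inE => xef; apply: contraT; rewrite negb_or => /andP[ye yf].
  case/orP: xef => /eqP xE; subst x.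
    have := no_path (s := [:: f; e; y]) erefl; rewrite /= fH eH yH => /(_ isT).
    by rewrite /= !inE negb_or eq_sym ef eq_sym yf eq_sym ye setIC ef2 xy2.
  have := no_path (s := [:: e; f; y]) erefl; rewrite /= fH eH yH => /(_ isT).
  by rewrite /= !inE negb_or ef eq_sym ye eq_sym yf ef2 xy2.
apply/setP => g; rewrite inE; apply/idP/idP => [eg|].
  by rewrite -(closed_connect closed_ef eg) !inE eqxx.
by rewrite !inE => /orP[] /eqP->; [apply: connect0 | apply: connect1].
Qed.

Lemma cluster_pair_at C e : C \in clusters H -> e \in C ->
  exists f, linkedH H e f /\ C = [set e; f].
Proof.
move=> /[dup] Cc /imsetP[e0 /[!inE] /andP[_ C2] defC] eC.
have defCe : C = compH H e by rewrite defC (@compH_eq e0 e) // -defC.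
have [g [gC gne]] : exists g, g \in C /\ g != e.
  have /card_gt1P[x [y [xC yC xy]]] : 1 < #|C| by rewrite defC.
  by case: (eqVneq x e) => [xe|]; [exists y; rewrite -xe eq_sym | exists x].
move: gC; rewrite defCe inE => /connectP[[|f p] /=].
  by move=> _ gE; rewrite gE eqxx in gne.
by case/andP=> lef _ _; exists f; rewrite (compH_linked lef).
Qed.

Lemma cluster_pair C : C \in clusters H ->
  exists e f, [/\ linkedH H e f, e \in C, f \in C & C = [set e; f]].
Proof.
move=> /[dup] Cc /imsetP[e _ defC].
have eC : e \in C by rewrite defC inE connect0.
have [f [lef defCe]] := cluster_pair_at Cc eC.
by exists e, f; split; rewrite // defCe !inE eqxx ?orbT.
Qed.

End NoLinkedPath.

Lemma avoid_thick_pair : avoids H 2 (@thick_pair _) ->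
  [forall e in H, forall f in H, (e != f) ==> (#|e :&: f| <= 2)].
Proof.
move=> no_thick; apply/forall_inP => e eH; apply/forall_inP => f fH; apply/implyP => ef.
have := no_thick [:: e; f] erefl; rewrite /= eH fH => /(_ isT).
by rewrite /= inE ef /= ltnNge negbK.
Qed.

Lemma avoid_pairs_card : avoids H 3 (@linked_path _) ->
  [forall C in clusters H, #|C| == 2].
Proof.
move=> no_path; apply/forall_inP => C /(cluster_pair no_path)[e [f [lef _ _ ->]]].
by rewrite cards2 linked_neq.
Qed.

Lemma avoid_touching_pairs : avoids H 3 (@linked_path _) -> avoids H 4 (@touching_pairs _) ->
  [forall C1 in clusters H, forall C2 in clusters H,
     (C1 != C2) ==> [disjoint vtx C1 & vtx C2]].
Proof.
move=> no_path no_touch; apply/forall_inP => C1 C1c; apply/forall_inP => C2 C2c.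
apply/implyP => C12; rewrite -setI_eq0; apply: contraT.
case/set0Pn=> x /setIP[/bigcupP[e1 e1C1 xe1] /bigcupP[e3 e3C2 xe3]].
have [e2 [l12 defC1]] := cluster_pair_at no_path C1c e1C1.
have [e4 [l34 defC2]] := cluster_pair_at no_path C2c e3C2.
have e2C1 : e2 \in C1 by rewrite defC1 !inE eqxx orbT.
have e4C2 : e4 \in C2 by rewrite defC2 !inE eqxx orbT.
have n12 := clusters_edge_neq C1c C2c C12.
have /and3P[e1H e2H c12] := l12; have /and3P[e3H e4H c34] := l34.
move: (no_touch [:: e1; e2; e3; e4] erefl); rewrite /= e1H e2H e3H e4H => /(_ isT) /negbTE <-.
rewrite /= c12 c34.
rewrite !inE !negb_or (linked_neq l12) (linked_neq l34) !n12 //=.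
by apply/card_gt0P; exists x; rewrite !inE xe1 xe3.
Qed.

Lemma avoid_three_pairs : avoids H 3 (@linked_path _) -> avoids H 6 (@three_pairs _) ->
  #|clusters H| <= 2.
Proof.
move=> no_path no_three; rewrite leqNgt; apply/negP.
case/card_gt2P=> C1 [C2 [C3 [[C1c C2c C3c] [C12 C23 C31]]]].
have [a1 [b1 [l1 a1C b1C _]]] := cluster_pair no_path C1c.
have [a2 [b2 [l2 a2C b2C _]]] := cluster_pair no_path C2c.
have [a3 [b3 [l3 a3C b3C _]]] := cluster_pair no_path C3c.
have n12 := clusters_edge_neq C1c C2c C12.
have n23 := clusters_edge_neq C2c C3c C23.
have C13 : C1 != C3 by rewrite eq_sym.
have n13 := clusters_edge_neq C1c C3c C13.
have /and3P[a1H b1H c1] := l1; have /and3P[a2H b2H c2] := l2.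
have /and3P[a3H b3H c3] := l3.
move: (no_three [:: a1; b1; a2; b2; a3; b3] erefl).
rewrite /= a1H b1H a2H b2H a3H b3H => /(_ isT) /negP; apply.
rewrite /= c1 c2 c3 !andbT !inE !negb_or (linked_neq l1) (linked_neq l2) (linked_neq l3).
by do ![apply/andP; split]; first [done | by apply: n12 | by apply: n13 | by apply: n23].
Qed.

End Structure.

Lemma Hrnm_ksubsets n r m : Hrnm n r m = ksubsets (rsets n r) m.
Proof.
apply/setP => H; rewrite !inE; congr (_ && _).
by apply/forall_inP/subsetP => rH e /rH; rewrite inE.
Qed.

Definition copies n r (H : hgraph n) k (P : pred (seq {set 'I_n})) : nat :=
  tuple_sum (rsets n r) k (fun s => P s && ([set x in s] \subset H)).

Lemma avoids_of_copies n r m (H : hgraph n) k P : H \in Hrnm n r m ->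
  copies r H k P = 0 -> avoids H k P.
Proof.
move=> H_in no_copy s sz Hs; apply/negP => Ps.
have sR : all (mem (rsets n r)) s.
  by apply/allP => e /(allP Hs) eH; rewrite /= inE (edge_card H_in eH).
have sH : [set x in s] \subset H by apply/subsetP => e; rewrite inE; apply: (allP Hs).
have := tuple_sum_ge (fun s => P s && ([set x in s] \subset H)) sz sR.
by rewrite -/(copies r H k P) no_copy Ps sH.
Qed.

Lemma copies_outside_plus n r m (H : hgraph n) : 2 < r -> H \in Hrnm n r m ->
  H \notin Hplus n r m ->
  0 < copies r H 2 (@thick_pair _) + copies r H 3 (@linked_path _)
      + copies r H 4 (@touching_pairs _) + copies r H 6 (@three_pairs _).
Proof.
move=> r_gt2 H_in; rewrite lt0n; apply: contraR; rewrite negbK !addn_eq0.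
case/andP=> /andP[/andP[/eqP noA /eqP noB] /eqP noC] /eqP noD.
move: noA noB noC noD => /(avoids_of_copies H_in) noA /(avoids_of_copies H_in) noB.
move=> /(avoids_of_copies H_in) noC /(avoids_of_copies H_in) noD.
rewrite inE H_in /=; apply/and4P; split.
- exact: avoid_thick_pair noA.
- exact (avoid_pairs_card r_gt2 H_in noB).
- exact (avoid_touching_pairs r_gt2 H_in noB noC).
- exact (avoid_three_pairs r_gt2 H_in noB noD).
Qed.

Lemma expected_copies n r m k j (P : pred (seq {set 'I_n})) c :
  r <= n -> (forall s, P s -> uniq s) ->
  tuple_sum (rsets n r) k P * n ^ j <= 'C(n, r) ^ k * c ->
  (\sum_(H in Hrnm n r m) copies r H k P) * n ^ j <= #|Hrnm n r m| * (m ^ k * c).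
Proof.
move=> rn P_uniq count_P.
have Nk_gt0 : 0 < 'C(n, r) ^ k by rewrite expn_gt0 bin_gt0 rn.
have := @first_moment _ (rsets n r) k P m P_uniq.
rewrite -card_ksubsets -Hrnm_ksubsets card_rsets => fm.
rewrite -(leq_pmul2l Nk_gt0) mulnA [_ * \sum_(_ in _) _]mulnC.
apply: (leq_trans (leq_mul fm (leqnn _))); rewrite mulnAC.
apply: (leq_trans (leq_mul count_P (leqnn _))).
by rewrite -mulnA [c * _]mulnC -mulnA.
Qed.

Lemma leq_mul_pow a b x i j : a * x ^ i <= b -> a * x ^ (i + j) <= b * x ^ j.
Proof. by rewrite expnD mulnA => ab; rewrite leq_mul2r ab orbT. Qed.

Lemma card_outside_plus n r m : 2 < r -> r <= n ->
  #|Hrnm n r m :\: Hplus n r m| * n ^ 6 <=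
    #|Hrnm n r m| * (m ^ 2 * r ^ 6) * n ^ 3 + #|Hrnm n r m| * (m ^ 3 * r ^ 8) * n ^ 2
    + #|Hrnm n r m| * (m ^ 4 * (2 * r ^ 10)) * n + #|Hrnm n r m| * (m ^ 6 * r ^ 12).
Proof.
move=> r_gt2 rn.
have outside_le : #|Hrnm n r m :\: Hplus n r m| <=
    \sum_(H in Hrnm n r m) (copies r H 2 (@thick_pair _) + copies r H 3 (@linked_path _)
      + copies r H 4 (@touching_pairs _) + copies r H 6 (@three_pairs _)).
  rewrite (_ : _ :\: _ = [set H in Hrnm n r m | H \notin Hplus n r m]); last first.
    by apply/setP => H; rewrite !inE andbC.
  rewrite -sum_indicator; apply: leq_sum => H H_in.
  by case: (boolP (H \in _)) => // /(copies_outside_plus r_gt2 H_in).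
apply: leq_trans (leq_mul outside_le (leqnn _)) _; rewrite !big_split /= !mulnDl.
apply: leq_add; first apply: leq_add; first apply: leq_add.
- apply: (@leq_mul_pow _ _ _ 3 3).
  exact: expected_copies rn (@thick_pair_uniq _) (count_thick_pair n r).
- apply: (@leq_mul_pow _ _ _ 4 2).
  exact: expected_copies rn (@linked_path_uniq _) (count_linked_path n r).
- apply: (@leq_mul_pow _ _ _ 5 1).
  exact: expected_copies rn (@touching_pairs_uniq _) (count_touching_pairs n r).
- exact: expected_copies rn (@three_pairs_uniq _) (count_three_pairs n r).
Qed.

From Stdlib Require Import Reals Lra.
Local Open Scope R_scope.

(* Needed to compare log(n / r^2) with sqrt n / r. *)
Lemma ln_lt_id y : 0 < y -> ln y < y.
Proof.
move=> y_gt0; apply: exp_lt_inv; rewrite exp_ln //.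
by have := exp_ineq1 y; lra.
Qed.

Lemma log_budget a rho nu K : 0 < rho -> 2 * rho <= sqrt nu ->
  a <= K * ln (nu / rho ^ 2) -> a * rho <= 2 * Rabs K * sqrt nu.
Proof.
move=> rho_gt0 rho_t aK; set t := sqrt nu in rho_t *.
have tr_ge2 : 2 <= t / rho.
  by apply: (Rmult_le_reg_r rho) => //; rewrite /Rdiv Rmult_assoc Rinv_l; lra.
have nu_ge0 : 0 <= nu.
  apply: Rnot_lt_le => nu_lt0.
  by have := sqrt_neg_0 nu (Rlt_le _ _ nu_lt0); rewrite -/t; lra.
have nu_sq : nu / rho ^ 2 = (t / rho) * (t / rho).
  by rewrite /t -{1}(sqrt_sqrt nu nu_ge0); field; lra.
have ln_small : ln (nu / rho ^ 2) <= 2 * (t / rho).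
  have tr_gt0 : 0 < t / rho by lra.
  by rewrite nu_sq ln_mult //; have := ln_lt_id tr_gt0; lra.
have ln_ge0 : 0 <= ln (nu / rho ^ 2).
  by rewrite -ln_1; apply/Rlt_le/ln_increasing; [lra | rewrite nu_sq; nra].
have : a <= Rabs K * (2 * (t / rho)).
  apply: Rle_trans aK _; apply: Rle_trans (Rmult_le_compat_r _ _ _ ln_ge0 (Rle_abs K)) _.
  by apply: Rmult_le_compat_l => //; apply: Rabs_pos.
move/(Rmult_le_compat_r rho _ _ (Rlt_le _ _ rho_gt0)).
by have -> : Rabs K * (2 * (t / rho)) * rho = 2 * Rabs K * t by field; lra.
Qed.

Lemma error_terms a rho nu K : 0 <= a -> 0 < rho -> 0 <= nu -> 1 <= K ->
  2 * K * rho <= sqrt nu -> a * rho <= 2 * K * sqrt nu ->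
  a ^ 2 * rho ^ 6 * nu ^ 3 + a ^ 3 * rho ^ 8 * nu ^ 2 + 2 * a ^ 4 * rho ^ 10 * nu
    + a ^ 6 * rho ^ 12 <= (4 + 4 * K ^ 4) * (a ^ 2 * rho ^ 6 * nu ^ 3).
Proof.
move=> a_ge0 rho_gt0 nu_ge0 K_ge1; set t := sqrt nu => rho_t a_t.
have t_ge0 : 0 <= t by apply: sqrt_pos.
have nu_tt : nu = t * t by rewrite /t sqrt_sqrt.
set w := a * rho in a_t *.
have w_ge0 : 0 <= w by apply: Rmult_le_pos; lra.
have w_rho : w * rho <= nu.
  rewrite nu_tt; apply: Rle_trans (Rmult_le_compat_r _ _ _ (Rlt_le _ _ rho_gt0) a_t) _.
  by have := Rmult_le_compat_l _ _ _ t_ge0 rho_t; lra.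
have w4_rho2 : w ^ 4 * rho ^ 2 <= 4 * K ^ 4 * nu ^ 3.
  have w4 : w ^ 4 <= (2 * K * t) ^ 4 by apply: pow_incr; lra.
  have rho2 : rho ^ 2 <= (t / 2) ^ 2 by apply: pow_incr; nra.
  have rho2_ge0 := pow_le _ 2 (Rlt_le _ _ rho_gt0).
  apply: Rle_trans (Rmult_le_compat _ _ _ _ (pow_le _ 4 w_ge0) rho2_ge0 w4 rho2) _.
  by rewrite nu_tt; apply: Req_le; field.
have -> : a ^ 2 * rho ^ 6 * nu ^ 3 + a ^ 3 * rho ^ 8 * nu ^ 2 + 2 * a ^ 4 * rho ^ 10 * nu
    + a ^ 6 * rho ^ 12 = a ^ 2 * rho ^ 6 *
      (nu ^ 3 + (w * rho) * nu ^ 2 + 2 * (w * rho) ^ 2 * nu + w ^ 4 * rho ^ 2).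
  by rewrite /w; ring.
have -> : (4 + 4 * K ^ 4) * (a ^ 2 * rho ^ 6 * nu ^ 3) =
    a ^ 2 * rho ^ 6 * ((4 + 4 * K ^ 4) * nu ^ 3) by ring.
apply: Rmult_le_compat_l.
  by apply: Rmult_le_pos; apply: pow_le; lra.
have wr_ge0 : 0 <= w * rho by apply: Rmult_le_pos; lra.
have sq : (w * rho) ^ 2 <= nu ^ 2 by apply: pow_incr.
have := Rmult_le_compat_r _ _ _ (pow_le _ 2 nu_ge0) w_rho.
have := Rmult_le_compat_r _ _ _ nu_ge0 sq.
have : 1 <= K ^ 4 by apply: pow_R1_Rle.
by have := pow_le _ 3 nu_ge0; nra.
Qed.

Lemma ratio_defect (T : finType) (A B : {set T}) : A \subset B -> (0 < #|B|)%nat ->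
  Rabs (INR #|A| / INR #|B| - 1) = INR #|B :\: A| / INR #|B|.
Proof.
move=> AB B_gt0; have B_pos : 0 < INR #|B| by apply/lt_0_INR/ltP.
rewrite cardsDS // minus_INR; last by apply/leP/subset_leq_card.
have -> : INR #|A| / INR #|B| - 1 = - ((INR #|B| - INR #|A|) / INR #|B|) by field; lra.
rewrite Rabs_Ropp Rabs_right //; apply/Rle_ge/Rmult_le_pos.
  by rewrite -minus_INR; [apply: pos_INR | apply/leP/subset_leq_card].
by apply/Rlt_le/Rinv_0_lt_compat.
Qed.

Lemma small_parameters n r m K : (2 < r)%nat -> 1 <= K ->
  2 * K * INR r <= sqrt (INR n) -> INR m * INR r <= 2 * K * sqrt (INR n) ->
  (r < n)%nat /\ (m <= 'C(n, r))%nat.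
Proof.
move=> r_gt2 K_ge1 r_small m_small.
have rho_ge3 : 3 <= INR r by have := le_INR 3 r (elimT leP r_gt2); rewrite /=; lra.
have t_ge0 := sqrt_pos (INR n); have nu_tt := sqrt_sqrt _ (pos_INR n).
have r_t : 2 * INR r <= sqrt (INR n) by nra.
have rn : (r < n)%nat by apply/ltP/INR_lt; rewrite -nu_tt; nra.
split=> //; apply: leq_trans (bin_ge_n (ltnW (ltnW r_gt2)) rn); apply/leP/INR_le.
have m_ge0 := pos_INR m.
have m_r2 : INR m * INR r * INR r <= INR n.
  have := Rmult_le_compat_r (INR r) _ _ (ltac:(lra)) m_small.
  have := Rmult_le_compat_l _ _ _ t_ge0 r_small.
  by rewrite -nu_tt; nra.
have : INR m * 1 <= INR m * (INR r * INR r) by apply: Rmult_le_compat_l => //; nra.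
by lra.
Qed.

Lemma plus_defect_bound n r m K : (2 < r)%nat -> 1 <= K ->
  2 * K * INR r <= sqrt (INR n) -> INR m * INR r <= 2 * K * sqrt (INR n) ->
  Rabs (INR #|Hplus n r m| / INR #|Hrnm n r m| - 1)
    <= (4 + 4 * K ^ 4) * (INR r ^ 6 * INR m ^ 2 / INR n ^ 3).
Proof.
move=> r_gt2 K_ge1 r_small m_small.
have [rn mN] := small_parameters r_gt2 K_ge1 r_small m_small.
have rho_gt0 : 0 < INR r by apply/lt_0_INR/ltP; apply: ltnW (ltnW r_gt2).
have Q_gt0 : (0 < #|Hrnm n r m|)%nat.
  by rewrite Hrnm_ksubsets card_ksubsets card_rsets bin_gt0.
rewrite ratio_defect //; last by apply/subsetP => H; rewrite inE => /andP[].
have := card_outside_plus m r_gt2 (ltnW rn) => /leP/le_INR.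
rewrite !plus_INR !mult_INR => bad_le.
set Q := INR #|Hrnm n r m| in bad_le *; set bad := INR #|_ :\: _| in bad_le *.
set a := INR m in bad_le m_small *; set rho := INR r in bad_le r_small m_small rho_gt0 *.
set nu := INR n in bad_le r_small m_small *.
have {}bad_le : bad * nu ^ 6 <= Q * (a ^ 2 * rho ^ 6 * nu ^ 3 + a ^ 3 * rho ^ 8 * nu ^ 2
    + 2 * a ^ 4 * rho ^ 10 * nu + a ^ 6 * rho ^ 12).
  apply: (Rle_trans _ _ _ (Req_le _ _ _) (Rle_trans _ _ _ bad_le (Req_le _ _ _))).
    by ring.
  by rewrite /=; ring.
have Q_pos : 0 < Q by apply/lt_0_INR/ltP.
have nu_pos : 0 < nu by apply/lt_0_INR/ltP; apply: leq_ltn_trans rn.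
have := error_terms (pos_INR m) rho_gt0 (pos_INR n) K_ge1 r_small m_small.
rewrite -/a -/nu.
move/(Rmult_le_compat_l _ _ _ (Rlt_le _ _ Q_pos))/(Rle_trans _ _ _ bad_le) => {}bad_le.
apply: (Rmult_le_reg_r (Q * nu ^ 6)); first by apply: Rmult_lt_0_compat => //; apply: pow_lt.
apply: (Rle_trans _ _ _ (Rle_trans _ _ _ (Req_le _ _ _) bad_le) (Req_le _ _ _)).
  by field; lra.
by field; lra.
Qed.

(* Take K' = |K| + 1 for the constant of m = O(log(n/r^2)) and eps = 1/(2K')
   in r = o(sqrt n); Theorem 8.1 then holds with C = 4 + 4 K'^4. *)
Unset Implicit Arguments. Set Strict Implicit. Set Printing Implicit Defensive.

Theorem theorem8p1 (r m : nat -> nat)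
  (hr3 : forall n : nat, (3 <= r n)%nat)
  (hro : forall eps : R, 0 < eps ->
     exists N : nat, forall n : nat, (N <= n)%nat -> INR (r n) <= eps * sqrt (INR n))
  (hm1 : forall n : nat, (1 <= m n)%nat)
  (hmO : exists (K : R) (N : nat), forall n : nat, (N <= n)%nat ->
     INR (m n) <= K * ln (INR n / (INR (r n)) ^ 2)) :
  exists (C : R) (N : nat), forall n : nat, (N <= n)%nat ->
    Rabs (INR #|Hplus n (r n) (m n)| / INR #|Hrnm n (r n) (m n)| - 1)
      <= C * ((INR (r n)) ^ 6 * (INR (m n)) ^ 2 / (INR n) ^ 3).
Proof.
case: hmO => K [N1 m_log]; set K' := Rabs K + 1.
have K'_ge1 : 1 <= K' by have := Rabs_pos K; rewrite /K'; lra.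
have [N2 r_o] := hro (/ (2 * K')) (ltac:(apply: Rinv_0_lt_compat; lra)).
exists (4 + 4 * K' ^ 4), (N1 + N2)%nat => n n_ge.
have rho_gt0 : 0 < INR (r n) by apply/lt_0_INR/ltP; apply: leq_trans (hr3 n).
have r_small : 2 * K' * INR (r n) <= sqrt (INR n).
  have := r_o n (leq_trans (leq_addl _ _) n_ge).
  move/(Rmult_le_compat_l (2 * K') _ _ (ltac:(lra))).
  by rewrite -Rmult_assoc Rinv_r ?Rmult_1_l; lra.
have m_small : INR (m n) * INR (r n) <= 2 * K' * sqrt (INR n).
  have r_t : 2 * INR (r n) <= sqrt (INR n).
    by apply: Rle_trans r_small; apply: Rmult_le_compat_r; lra.
  have := log_budget rho_gt0 r_t (m_log n (leq_trans (leq_addr _ _) n_ge)).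
  by have := sqrt_pos (INR n); rewrite /K'; nra.
exact: plus_defect_bound (hr3 n) K'_ge1 r_small m_small.
Qed.
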